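(* Let $h:\mathbb{R}\to\mathbb{R}$ be of class $C^1$, let $x_0\in\mathbb{R}$, and let $\Phi$ be a real function of class $C^2$ on an interval $]x_-,x_+[$ with $x_-<x_0<x_+$, such that $h(x)\neq\Phi^2(x)$ for all $x\in]x_-,x_+[$. Define on $]x_-,x_+[$ \[ u_{\mathtt{top}}(x)=\exp\left[\int_{x_0}^{x}d\xi\,\Phi(\xi)\frac{\Phi'(\xi)-\sqrt{\left[h(\xi)-\Phi^{2}(\xi)\right]^{2}+\left[\Phi'(\xi)\right]^{2}}}{h(\xi)-\Phi^{2}(\xi)}\right], \] \[ u_{\mathtt{bot}}(x)=\exp\left[\int_{x_0}^{x}d\xi\,\Phi(\xi)\frac{\Phi'(\xi)+\sqrt{\left[h(\xi)-\Phi^{2}(\xi)\right]^{2}+\left[\Phi'(\xi)\right]^{2}}}{h(\xi)-\Phi^{2}(\xi)}\right]. \] Then $u(x)=A\,u_{\mathtt{top}}(x)+B\,u_{\mathtt{bot}}(x)$, with $A,B$ arbitrary constants, is the general solution of $u''(x)+h(x)u(x)=0$ on $]x_-,x_+[$ if and only if $\Phi$ satisfies on $]x_-,x_+[$ the equation \[ \Phi''(x)=\frac{3\Phi^{2}(x)+h(x)}{\Phi^{2}(x)-h(x)}\frac{\left[\Phi'(x)\right]^{2}}{\Phi(x)}-\frac{h'(x)\Phi'(x)}{\Phi^{2}(x)-h(x)}+\frac{\Phi^{4}(x)-h^{2}(x)}{\Phi(x)}. \]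
   Context: The equation for $\Phi$ is the equation satisfied by geodesic curves, written in explicit form $\varPhi=\Phi(x)$, of the Riemannian metric $g_h=\left[(h(x)-\varPhi^2)^2dx^2+d\varPhi^2\right]/\varPhi^2$ on $\{(x,\varPhi)\mid\varPhi>0,\ \varPhi^2\neq h(x)\}$, a metric of constant curvature $-1$. *)

From Stdlib Require Import Reals.
From Coquelicot Require Import Coquelicot.
Open Scope R_scope.

Definition in_ioo (a b x : R) : Prop := a < x < b.

Definition integrand_top (h Phi : R -> R) (xi : R) : R :=
  Phi xi * (Derive Phi xi
            - sqrt ((h xi - (Phi xi)^2)^2 + (Derive Phi xi)^2))
         / (h xi - (Phi xi)^2).

Definition integrand_bot (h Phi : R -> R) (xi : R) : R :=
  Phi xi * (Derive Phi xi
            + sqrt ((h xi - (Phi xi)^2)^2 + (Derive Phi xi)^2))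
         / (h xi - (Phi xi)^2).

Definition u_top (h Phi : R -> R) (x0 x : R) : R :=
  exp (RInt (integrand_top h Phi) x0 x).

Definition u_bot (h Phi : R -> R) (x0 x : R) : R :=
  exp (RInt (integrand_bot h Phi) x0 x).

Definition is_solution (h : R -> R) (a b : R) (u : R -> R) : Prop :=
  forall x, in_ioo a b x ->
    ex_derive u x /\ ex_derive (Derive u) x /\
    Derive (Derive u) x + h x * u x = 0.

Definition general_solution (h : R -> R) (a b : R) (u1 u2 : R -> R) : Prop :=
  forall u : R -> R,
    is_solution h a b u <->
    exists A B : R, forall x, in_ioo a b x -> u x = A * u1 x + B * u2 x.

(* The ODE for Phi at x; the right-hand side contains 1/Phi(x), so the
   equation is only meaningful where Phi(x) <> 0, which we require. *)
Definition Phi_equation (h Phi : R -> R) (x : R) : Prop :=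
  Phi x <> 0 /\
  Derive (Derive Phi) x =
    (3 * (Phi x)^2 + h x) / ((Phi x)^2 - h x) * (Derive Phi x)^2 / Phi x
    - Derive h x * Derive Phi x / ((Phi x)^2 - h x)
    + ((Phi x)^4 - (h x)^2) / Phi x.

(* u = exp (RInt f x0 _) solves u'' + h u = 0 exactly when f solves the Riccati equation
   f' + f^2 + h = 0.  For f = Phi (Phi' + e S) / D with D = h - Phi^2,
   S = sqrt (D^2 + Phi'^2) and e = -1 or 1 (the integrands of u_top and u_bot), the Riccati
   residual times D^2 S equals the Phi-equation with cleared denominators times S + e Phi',
   and S + e Phi' > 0.  So u_top (or u_bot) is a solution iff Phi satisfies its equation.
   In that case the Wronskian of u_top and u_bot at x0 is 2 Phi S / D <> 0; since Wronskians
   of solutions are constant, every solution is a combination of u_top and u_bot. *)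

From Stdlib Require Import Reals Lra Psatz FunctionalExtensionality.
From Coquelicot Require Import Coquelicot.
Open Scope R_scope.

(* auto_derive produces terms like [Derive (fun x => f x)], which ring does not identify
   with [Derive f]. *)
Ltac eta_contract :=
  repeat match goal with |- context [fun x : R => ?f x] => change (fun x : R => f x) with f end.

Section OpenInterval.

Variables a b : R.

Lemma locally_in_ioo x : in_ioo a b x -> locally x (in_ioo a b).
Proof. intros Hx. exact (open_and _ _ (open_gt a) (open_lt b) x Hx). Qed.

Lemma in_ioo_between x y z : in_ioo a b x -> in_ioo a b y ->
  Rmin x y <= z <= Rmax x y -> in_ioo a b z.
Proof.
  unfold in_ioo; intros Hx Hy [Hz1 Hz2]; split.
  - eapply Rlt_le_trans; [|exact Hz1]. apply Rmin_glb_lt; lra.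
  - eapply Rle_lt_trans; [exact Hz2|]. apply Rmax_lub_lt; lra.
Qed.

Lemma is_derive_zero_const_on_ioo (F : R -> R) :
  (forall y, in_ioo a b y -> is_derive F y 0) ->
  forall x y, in_ioo a b x -> in_ioo a b y -> F x = F y.
Proof.
  intros HF x y Hx Hy.
  assert (Hbetween : forall z, Rmin x y <= z <= Rmax x y -> is_derive F z 0).
  { intros z Hz. exact (HF z (in_ioo_between x y z Hx Hy Hz)). }
  destruct (MVT_gen F x y (fun _ => 0)) as [c [_ Hc]].
  - intros z Hz. apply Hbetween. lra.
  - intros z Hz. apply continuity_pt_filterlim.
    apply (ex_derive_continuous (K := R_AbsRing) (V := R_NormedModule)).
    exists 0. exact (Hbetween z Hz).
  - lra.
Qed.

Lemma is_derive_ext_on_ioo (u v : R -> R) x l :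
  (forall y, in_ioo a b y -> v y = u y) -> in_ioo a b x ->
  is_derive v x l -> is_derive u x l.
Proof.
  intros Huv Hx. apply is_derive_ext_loc.
  exact (filter_imp _ _ Huv (locally_in_ioo x Hx)).
Qed.

Lemma is_derive_Derive_on_ioo (u du d2u : R -> R) x :
  (forall y, in_ioo a b y -> is_derive u y (du y)) ->
  (forall y, in_ioo a b y -> is_derive du y (d2u y)) ->
  in_ioo a b x -> is_derive (Derive u) x (d2u x).
Proof.
  intros Hu Hdu Hx. apply (is_derive_ext_on_ioo _ du); auto.
  intros y Hy. symmetry. exact (is_derive_unique _ _ _ (Hu y Hy)).
Qed.

End OpenInterval.

Definition wronskian (f g : R -> R) (x : R) : R := f x * Derive g x - Derive f x * g x.

Section SecondOrderLinearODE.

Variables (h : R -> R) (a b : R).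

Lemma wronskian_const_on_ioo f g :
  is_solution h a b f -> is_solution h a b g ->
  forall x y, in_ioo a b x -> in_ioo a b y -> wronskian f g x = wronskian f g y.
Proof.
  intros Hf Hg. apply is_derive_zero_const_on_ioo. intros y Hy.
  destruct (Hf y Hy) as [Hf1 [Hf2 Hf3]], (Hg y Hy) as [Hg1 [Hg2 Hg3]].
  unfold wronskian. auto_derive; [tauto|]. eta_contract.
  replace (Derive (Derive f) y) with (- h y * f y) by lra.
  replace (Derive (Derive g) y) with (- h y * g y) by lra.
  ring.
Qed.

Lemma is_solution_lincomb u1 u2 A B u :
  is_solution h a b u1 -> is_solution h a b u2 ->
  (forall x, in_ioo a b x -> u x = A * u1 x + B * u2 x) -> is_solution h a b u.
Proof.
  intros H1 H2 Hu.
  assert (Du : forall y, in_ioo a b y ->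
    is_derive u y (A * Derive u1 y + B * Derive u2 y)).
  { intros y Hy. apply (is_derive_ext_on_ioo a b u (fun t => A * u1 t + B * u2 t)); auto.
    - intros; symmetry; auto.
    - destruct (H1 y Hy) as [? _], (H2 y Hy) as [? _]. auto_derive; auto. eta_contract. ring. }
  assert (D2u : forall y, in_ioo a b y -> is_derive (Derive u) y
    (A * Derive (Derive u1) y + B * Derive (Derive u2) y)).
  { intros y Hy. apply (is_derive_Derive_on_ioo a b u (fun t => A * Derive u1 t + B * Derive u2 t)
      (fun t => A * Derive (Derive u1) t + B * Derive (Derive u2) t)); auto.
    intros z Hz. destruct (H1 z Hz) as [_ [? _]], (H2 z Hz) as [_ [? _]].
    auto_derive; auto. eta_contract. ring. }
  intros x Hx. split; [exists (A * Derive u1 x + B * Derive u2 x); auto|].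
  split; [eexists; exact (D2u x Hx)|].
  destruct (H1 x Hx) as [_ [_ E1]], (H2 x Hx) as [_ [_ E2]].
  rewrite (is_derive_unique _ _ _ (D2u x Hx)), (Hu x Hx).
  replace (Derive (Derive u1) x) with (- h x * u1 x) by lra.
  replace (Derive (Derive u2) x) with (- h x * u2 x) by lra.
  ring.
Qed.

(* Pointwise, W(u1,u2) u = W(u,u2) u1 - W(u,u1) u2, and all three Wronskians are constant. *)
Lemma solution_in_span u1 u2 x0 :
  in_ioo a b x0 -> is_solution h a b u1 -> is_solution h a b u2 ->
  wronskian u1 u2 x0 <> 0 ->
  forall u, is_solution h a b u ->
  exists A B, forall x, in_ioo a b x -> u x = A * u1 x + B * u2 x.
Proof.
  intros Hx0 H1 H2 HW u Hu.
  exists (wronskian u u2 x0 / wronskian u1 u2 x0),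
         (- (wronskian u u1 x0 / wronskian u1 u2 x0)).
  intros x Hx.
  rewrite (wronskian_const_on_ioo u u2 Hu H2 x0 x),
    (wronskian_const_on_ioo u u1 Hu H1 x0 x) by assumption.
  rewrite (wronskian_const_on_ioo u1 u2 H1 H2 x0 x) in HW |- * by assumption.
  unfold wronskian in *. field. exact HW.
Qed.

End SecondOrderLinearODE.

Lemma exp_RInt_point (f : R -> R) x0 : exp (RInt f x0 x0) = 1.
Proof. rewrite RInt_point. exact exp_0. Qed.

Section ExpIntegral.

Variables (a b x0 : R) (f df : R -> R).
Hypothesis in_ioo_x0 : in_ioo a b x0.
Hypothesis is_derive_f : forall x, in_ioo a b x -> is_derive f x (df x).

Lemma is_derive_exp_RInt x : in_ioo a b x ->
  is_derive (fun y => exp (RInt f x0 y)) x (f x * exp (RInt f x0 x)).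
Proof.
  intros Hx.
  assert (Hcont : forall y, in_ioo a b y -> continuous f y).
  { intros y Hy. apply (ex_derive_continuous (K := R_AbsRing) (V := R_NormedModule)).
    exists (df y). auto. }
  apply (is_derive_comp exp (RInt f x0)); [apply is_derive_exp|].
  apply (is_derive_RInt f _ x0); [|auto].
  apply (filter_imp (in_ioo a b)); [|exact (locally_in_ioo a b x Hx)].
  intros y Hy. apply (RInt_correct (V := R_CompleteNormedModule)).
  apply (ex_RInt_continuous (V := R_CompleteNormedModule)). intros z Hz.
  apply Hcont, (in_ioo_between a b x0 y); auto.
Qed.

Lemma Derive_exp_RInt_x0 : Derive (fun y => exp (RInt f x0 y)) x0 = f x0.
Proof.
  replace (f x0) with (f x0 * exp (RInt f x0 x0)) by (rewrite exp_RInt_point; ring).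
  exact (is_derive_unique _ _ _ (is_derive_exp_RInt x0 in_ioo_x0)).
Qed.

(* Writing u = exp (RInt f x0 _), one has u'' + h u = (f' + f ^ 2 + h) u with u > 0. *)
Lemma exp_RInt_solution_iff_riccati h :
  is_solution h a b (fun y => exp (RInt f x0 y)) <->
  forall x, in_ioo a b x -> df x + f x ^ 2 + h x = 0.
Proof.
  set (u := fun y => exp (RInt f x0 y)).
  assert (D2u : forall x, in_ioo a b x ->
    is_derive (Derive u) x ((df x + f x ^ 2) * u x)).
  { intros x Hx. apply (is_derive_Derive_on_ioo a b u (fun y => f y * u y)
      (fun y => (df y + f y ^ 2) * u y)); auto.
    - exact is_derive_exp_RInt.
    - intros y Hy.
      replace ((df y + f y ^ 2) * u y) with (df y * u y + f y * (f y * u y)) by ring.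
      apply (is_derive_mult f u); auto.
      + apply is_derive_exp_RInt; auto.
      + intros; apply Rmult_comm. }
  split.
  - intros Hu x Hx. destruct (Hu x Hx) as [_ [_ Hode]].
    rewrite (is_derive_unique _ _ _ (D2u x Hx)) in Hode.
    assert (0 < u x) by apply exp_pos.
    apply (Rmult_eq_reg_r (u x)); lra.
  - intros Hric x Hx. split; [eexists; apply is_derive_exp_RInt; auto|].
    split; [eexists; exact (D2u x Hx)|].
    rewrite (is_derive_unique _ _ _ (D2u x Hx)).
    replace (df x + f x ^ 2) with (- h x) by (specialize (Hric x Hx); lra).
    ring.
Qed.

End ExpIntegral.

Lemma wronskian_exp_RInt_x0 a b x0 (f g df dg : R -> R) : in_ioo a b x0 ->
  (forall x, in_ioo a b x -> is_derive f x (df x)) ->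
  (forall x, in_ioo a b x -> is_derive g x (dg x)) ->
  wronskian (fun y => exp (RInt f x0 y)) (fun y => exp (RInt g x0 y)) x0 = g x0 - f x0.
Proof.
  intros Hx0 Hf Hg. unfold wronskian.
  rewrite (Derive_exp_RInt_x0 a b x0 f df), (Derive_exp_RInt_x0 a b x0 g dg), !exp_RInt_point
    by assumption.
  ring.
Qed.

Definition integrand_sgn (e : R) (h Phi : R -> R) (x : R) : R :=
  Phi x * (Derive Phi x + e * sqrt ((h x - Phi x ^ 2) ^ 2 + Derive Phi x ^ 2))
  / (h x - Phi x ^ 2).

Lemma integrand_top_sgn h Phi : integrand_top h Phi = integrand_sgn (-1) h Phi.
Proof.
  apply functional_extensionality; intros x.
  unfold integrand_top, integrand_sgn, Rdiv. ring.
Qed.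

Lemma integrand_bot_sgn h Phi : integrand_bot h Phi = integrand_sgn 1 h Phi.
Proof.
  apply functional_extensionality; intros x.
  unfold integrand_bot, integrand_sgn, Rdiv. ring.
Qed.

Definition Phi_equation_numerator (p p1 p2 hh h1 : R) : R :=
  (hh - p ^ 2) * (p1 ^ 2 + p * p2) - p * p1 * h1 + 4 * p ^ 2 * p1 ^ 2
  + (p ^ 2 + hh) * (hh - p ^ 2) ^ 2.

Lemma Phi_equation_numerator_eq0 p p1 p2 hh h1 : hh <> p ^ 2 ->
  Phi_equation_numerator p p1 p2 hh h1 = 0 <->
  p <> 0 /\
  p2 = (3 * p ^ 2 + hh) / (p ^ 2 - hh) * p1 ^ 2 / p - h1 * p1 / (p ^ 2 - hh)
       + (p ^ 4 - hh ^ 2) / p.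
Proof.
  intros HD. unfold Phi_equation_numerator. split.
  - intros H0.
    assert (Hp : p <> 0).
    { intros ->. assert (hh * (p1 ^ 2 + hh ^ 2) = 0) by (rewrite <- H0; ring).
      assert (hh <> 0) by (intros ->; apply HD; ring).
      assert (0 < hh ^ 2) by (apply pow2_gt_0; auto). nra. }
    split; [exact Hp|].
    apply (Rmult_eq_reg_l (p * (hh - p ^ 2))).
    + rewrite <- (Rminus_0_r (p * (hh - p ^ 2) * p2)), <- H0. field. lra.
    + apply Rmult_integral_contrapositive; split; lra.
  - intros [Hp ->]. field. lra.
Qed.

Lemma riccati_residual_factorization (e p p1 p2 hh h1 S : R) :
  (e = 1 \/ e = -1) -> hh - p ^ 2 <> 0 -> S <> 0 ->
  S ^ 2 = (hh - p ^ 2) ^ 2 + p1 ^ 2 ->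
  let D := hh - p ^ 2 in
  let f := p * (p1 + e * S) / D in
  let df := (p1 * (p1 + e * S) + p * (p2 + e * (D * (h1 - 2 * p * p1) + p1 * p2) / S)) / D
            - p * (p1 + e * S) * (h1 - 2 * p * p1) / D ^ 2 in
  (df + f ^ 2 + hh) * D ^ 2 * S = Phi_equation_numerator p p1 p2 hh h1 * (S + e * p1).
Proof.
  intros He HD HS HS2 D f df. unfold df, f, D, Phi_equation_numerator.
  destruct He as [-> | ->]; field_simplify; try (split; assumption);
    replace (S ^ 3) with (S * S ^ 2) by ring; rewrite HS2; ring.
Qed.

Lemma is_derive_integrand_sgn e h Phi x :
  ex_derive h x -> ex_derive Phi x -> ex_derive (Derive Phi) x -> h x <> Phi x ^ 2 ->
  let D := h x - Phi x ^ 2 in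
  let S := sqrt (D ^ 2 + Derive Phi x ^ 2) in
  let p := Phi x in let p1 := Derive Phi x in let p2 := Derive (Derive Phi) x in
  let h1 := Derive h x in
  is_derive (integrand_sgn e h Phi) x
    ((p1 * (p1 + e * S) + p * (p2 + e * (D * (h1 - 2 * p * p1) + p1 * p2) / S)) / D
     - p * (p1 + e * S) * (h1 - 2 * p * p1) / D ^ 2).
Proof.
  intros Hh HPhi HPhi' HD D S p p1 p2 h1.
  unfold p, p1, p2, h1, integrand_sgn.
  assert (HD0 : D <> 0) by (unfold D; lra).
  assert (HS2 : 0 < D ^ 2 + Derive Phi x ^ 2)
    by (assert (0 < D ^ 2) by (apply pow2_gt_0; auto); nra).
  assert (HS : 0 < S) by (apply sqrt_lt_R0; exact HS2).
  auto_derive; replace ((h x + - (Phi x * (Phi x * 1))) * ((h x + - (Phi x * (Phi x * 1))) * 1)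
      + Derive Phi x * (Derive Phi x * 1)) with (D ^ 2 + Derive Phi x ^ 2) by (unfold D; ring).
  - repeat split; auto.
  - fold S. eta_contract. unfold D in *. field. split; lra.
Qed.

Lemma riccati_integrand_sgn_iff e h Phi x :
  (e = 1 \/ e = -1) ->
  ex_derive h x -> ex_derive Phi x -> ex_derive (Derive Phi) x -> h x <> Phi x ^ 2 ->
  Derive (integrand_sgn e h Phi) x + integrand_sgn e h Phi x ^ 2 + h x = 0 <->
  Phi_equation h Phi x.
Proof.
  intros He Hh HPhi HPhi' HD.
  rewrite (is_derive_unique _ _ _ (is_derive_integrand_sgn e h Phi x Hh HPhi HPhi' HD)).
  unfold Phi_equation. rewrite <- Phi_equation_numerator_eq0 by exact HD.
  unfold integrand_sgn. cbv zeta.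
  set (D := h x - Phi x ^ 2). set (S := sqrt (D ^ 2 + Derive Phi x ^ 2)).
  assert (HD0 : D <> 0) by (unfold D; lra).
  assert (HD2 : 0 < D ^ 2) by (apply pow2_gt_0; auto).
  assert (HS2 : S ^ 2 = D ^ 2 + Derive Phi x ^ 2) by (unfold S; rewrite pow2_sqrt; nra).
  assert (HS : 0 < S) by (unfold S; apply sqrt_lt_R0; nra).
  (* S > |Phi'| because D <> 0 *)
  assert (Hpos : 0 < S + e * Derive Phi x) by (destruct He as [-> | ->]; nra).
  pose proof (riccati_residual_factorization e (Phi x) (Derive Phi x) (Derive (Derive Phi) x)
    (h x) (Derive h x) S He HD0 (Rgt_not_eq _ _ HS) HS2) as Hfac.
  cbv zeta in Hfac. fold D in Hfac.
  split; intros H0; rewrite H0 in Hfac.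
  - apply (Rmult_eq_reg_r (S + e * Derive Phi x)); [rewrite <- Hfac; ring | lra].
  - apply (Rmult_eq_reg_r (D ^ 2 * S)); [rewrite <- Rmult_assoc, Hfac; ring | nra].
Qed.

Lemma integrand_sgn_gap h Phi x : Phi x <> 0 -> h x <> Phi x ^ 2 ->
  integrand_sgn 1 h Phi x - integrand_sgn (-1) h Phi x <> 0.
Proof.
  intros Hp HD. unfold integrand_sgn.
  set (S := sqrt _).
  assert (HS : 0 < S).
  { unfold S. apply sqrt_lt_R0.
    assert (0 < (h x - Phi x ^ 2) ^ 2) by (apply pow2_gt_0; lra). nra. }
  replace (_ - _) with (2 * Phi x * S / (h x - Phi x ^ 2)) by (field; lra).
  unfold Rdiv. repeat apply Rmult_integral_contrapositive_currified; try lra.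
  apply Rinv_neq_0_compat. lra.
Qed.

Theorem theorem2p10 (h Phi : R -> R) (x0 xm xp : R) :
  (* h is C^1 on R *)
  (forall x, ex_derive h x /\ continuous (Derive h) x) ->
  xm < x0 < xp ->
  (* Phi is C^2 on ]xm, xp[ *)
  (forall x, in_ioo xm xp x ->
     ex_derive Phi x /\ ex_derive (Derive Phi) x /\
     continuous (Derive (Derive Phi)) x) ->
  (forall x, in_ioo xm xp x -> h x <> (Phi x)^2) ->
  (general_solution h xm xp (u_top h Phi x0) (u_bot h Phi x0) <->
   forall x, in_ioo xm xp x -> Phi_equation h Phi x).
Proof.
  intros Hh Hx0 HPhi HD.
  set (u e := fun x => exp (RInt (integrand_sgn e h Phi) x0 x)).
  assert (Hderiv : forall e x, in_ioo xm xp x ->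
    is_derive (integrand_sgn e h Phi) x (Derive (integrand_sgn e h Phi) x)).
  { intros e x Hx. destruct (HPhi x Hx) as [? [? _]]. apply Derive_correct.
    eexists. apply is_derive_integrand_sgn; auto. apply Hh. }
  assert (Hsol : forall e, (e = 1 \/ e = -1) ->
    is_solution h xm xp (u e) <-> forall x, in_ioo xm xp x -> Phi_equation h Phi x).
  { intros e He. unfold u.
    rewrite (exp_RInt_solution_iff_riccati xm xp x0 _ _ Hx0 (Hderiv e)).
    split; intros H x Hx; destruct (HPhi x Hx) as [? [? _]];
      apply (riccati_integrand_sgn_iff e); auto; apply Hh. }
  replace (u_top h Phi x0) with (u (-1)) by (unfold u_top, u; rewrite integrand_top_sgn; reflexivity).
  replace (u_bot h Phi x0) with (u 1) by (unfold u_bot, u; rewrite integrand_bot_sgn; reflexivity).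
  split.
  - intros Hgen. apply (Hsol (-1)); [now right|].
    apply Hgen. exists 1, 0. intros; ring.
  - intros HE.
    assert (Htop : is_solution h xm xp (u (-1))) by (apply Hsol; auto).
    assert (Hbot : is_solution h xm xp (u 1)) by (apply Hsol; auto).
    intros v. split.
    + apply (solution_in_span h xm xp _ _ x0 Hx0 Htop Hbot).
      unfold u. rewrite (wronskian_exp_RInt_x0 xm xp x0 _ _ _ _ Hx0 (Hderiv (-1)) (Hderiv 1)).
      apply integrand_sgn_gap; [apply HE|apply HD]; exact Hx0.
    + intros [A [B HAB]]. exact (is_solution_lincomb h xm xp _ _ A B v Htop Hbot HAB).
Qed.
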